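(* Let $K\subseteq\mathbb{R}^n$ be a proper cone and let $A\in\mathbb{R}^{n\times n}$ be $K$-monotone. Let $A=U-V$ be a $K$-regular splitting. Let $U=F-G=\overline{F}-\overline{G}$ be two $K$-weak regular splittings of type II of $U$ such that $VF^{-1}G=GF^{-1}V$ and $V\overline{F}^{-1}\overline{G}=\overline{G}\,\overline{F}^{-1}V$. For a positive integer $s$ define $$T_{s}=(F^{-1}G)^{s}+\sum_{j=0}^{s-1}(F^{-1}G)^{j}F^{-1}V,\qquad \overline{T}_{s}=(\overline{F}^{-1}\overline{G})^{s}+\sum_{j=0}^{s-1}(\overline{F}^{-1}\overline{G})^{j}\overline{F}^{-1}V,$$ $$\widehat{\overline{T}}_{s}=(\overline{G}\,\overline{F}^{-1})^{s}+\sum_{j=0}^{s-1}(\overline{G}\,\overline{F}^{-1})^{j}V\overline{F}^{-1},$$ and let $\overline{P}_s$ be the matrix with $\overline{P}_s^{-1}=\sum_{j=0}^{s-1}(\overline{F}^{-1}\overline{G})^j\overline{F}^{-1}$. Suppose that (i) $\widehat{\overline{T}}_s\overline{P}_s\geq_K 0$ for every positive integer $s$, (ii) $F^{-1}\geq_K\overline{F}^{-1}$, (iii) $\overline{F}^{-1}\overline{G}\geq_K 0$. Then $\rho(T_s)\leq\rho(\overline{T}_s)<1$.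
   Context: A proper cone $K\subseteq\mathbb{R}^n$ is a closed, convex, pointed, solid cone. For $M\in\mathbb{R}^{n\times n}$, $M\geq_K 0$ means $MK\subseteq K$, and $M\geq_K N$ means $M-N\geq_K0$. A matrix $A$ is $K$-monotone if $A$ is nonsingular and $A^{-1}\geq_K 0$. A splitting $A=U-V$ (with $U$ nonsingular) is $K$-regular if $U^{-1}\geq_K 0$ and $V\geq_K 0$; it is a $K$-weak regular splitting of type II if $U^{-1}\geq_K 0$ and $VU^{-1}\geq_K 0$. $\rho$ denotes spectral radius. *)

From HB Require Import structures.
From mathcomp Require Import all_boot all_order all_algebra.
From mathcomp Require Import all_classical all_reals all_analysis.
From mathcomp Require Import complex.

Set Implicit Arguments.
Unset Strict Implicit.
Unset Printing Implicit Defensive.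

Import Order.TTheory GRing.Theory Num.Theory.
Import numFieldNormedType.Exports.

Local Open Scope classical_set_scope.
Local Open Scope ring_scope.

Section ConeDefs.
Variables (R : realType) (n : nat).
Implicit Types (K : set 'cV[R]_n) (M N : 'M[R]_n).

Definition is_cone K := forall (a : R) x, 0 <= a -> K x -> K (a *: x).
Definition cone_convex K :=
  forall (t : R) x y, 0 <= t <= 1 -> K x -> K y -> K (t *: x + (1 - t) *: y).
Definition cone_pointed K := forall x, K x -> K (- x) -> x = 0.
Definition cone_solid K := (K)° !=set0.

Definition proper_cone K :=
  [/\ is_cone K, closed K, cone_convex K, cone_pointed K & cone_solid K].

Definition Knonneg K M := forall x, K x -> K (M *m x).
Definition Kge K M N := Knonneg K (M - N).

Definition K_monotone K A := A \in unitmx /\ Knonneg K (invmx A).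

Definition K_regular_splitting K A U V :=
  [/\ A = U - V, U \in unitmx, Knonneg K (invmx U) & Knonneg K V].

Definition K_weak_regular_splitting_II K A U V :=
  [/\ A = U - V, U \in unitmx, Knonneg K (invmx U) & Knonneg K (V *m invmx U)].

(* matrix power for square matrices of arbitrary size n *)
Definition mxpow M (k : nat) : 'M[R]_n := iter k (mulmx M) 1%:M.

(* spectral radius: largest modulus of a complex eigenvalue
   (root of the characteristic polynomial over R[i]); 0 if n = 0 *)
Definition spectral_radius M : R :=
  sup [set r : R | exists l : R[i],
         root (char_poly (map_mx (fun x : R => x%:C%C) M)) l /\ r = Normc.normc l].

End ConeDefs.

(* Both inequalities are Perron-Frobenius-type facts about matrices that leave
   a proper cone invariant, proved by an eigenvector argument instead of the
   Krein-Rutman theorem.  If B maps a convex cone with order unit e into itself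
   and B w = mu w, then rotating the phase of the complex eigenvector w shows
   that c B^k e +- |mu|^k Re (z w) stays in the cone for all k.  If the partial
   sums of B^k e are bounded in the cone order and |mu| >= 1, dividing by the
   number of terms forces Re (z w) = 0 (the cone is closed and pointed); if T is
   dominated by Tb on the cone A^-1 K and |mu| > rho(Tb), the decay of
   (Tb / |mu|)^k, which comes from the Cayley-Hamilton theorem, does the same.
   Writing Tb_s for the iteration matrix of the barred splitting, the identities
   T_s = 1 - P_s^-1 A, Tb_s = 1 - Pb_s^-1 A and That_s = 1 - A Pb_s^-1 reduce
   the theorem to these two facts: condition (i) says Pb_s - A >=_K 0, so
   (1 - Tb_s)^-1 = A^-1 Pb_s >=_K 0 bounds the partial sums of the powers of
   Tb_s; and (ii), (iii) give P_s^-1 - Pb_s^-1 >=_K 0, so T_s <= Tb_s on A^-1 K. *)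

From HB Require Import structures.
From mathcomp Require Import all_boot all_order all_algebra.
From mathcomp Require Import all_classical all_reals all_analysis.
From mathcomp Require Import complex.
From mathcomp Require Import ring lra.

Import Order.TTheory GRing.Theory Num.Theory.
Import numFieldNormedType.Exports.
Local Open Scope classical_set_scope.
Local Open Scope ring_scope.

Set Implicit Arguments.
Unset Strict Implicit.
Unset Printing Implicit Defensive.

Section ComplexNorm.
Variable R : rcfType.
Implicit Types x : R[i].
Local Notation normc := (@Normc.normc R).

Lemma normc_ge0 x : 0 <= normc x.
Proof. by case: x => a b; apply: sqrtr_ge0. Qed.

Lemma normcX x k : normc (x ^+ k) = normc x ^+ k.
Proof. by elim: k => [|k IH]; rewrite ?Normc.normc1 // !exprS Normc.normcM IH. Qed.

Lemma normc_real (a : R) : normc a%:C%C = `|a|.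
Proof. by rewrite /Normc.normc /= expr0n addr0 sqrtr_sqr. Qed.

Lemma normc_sqr x : normc x ^+ 2 = complex.Re x ^+ 2 + complex.Im x ^+ 2.
Proof. by case: x => a b; rewrite /Normc.normc /= sqr_sqrtr // addr_ge0 ?sqr_ge0. Qed.

Lemma normc_phase x : exists2 r, normc r = 1 & r * x = (normc x)%:C%C.
Proof.
have [->|x_neq0] := eqVneq x 0.
  by exists 1; rewrite ?Normc.normc1 // mulr0 Normc.normc0.
exists ((normc x)%:C%C / x); last by rewrite divfK.
rewrite Normc.normcM Normc.normcV normc_real ger0_norm ?normc_ge0 // mulfV //.
by apply: contra x_neq0 => /eqP /Normc.eq0_normc ->.
Qed.

End ComplexNorm.

Section Vanishing.
Variable R : realType.

Definition vanishing (u : nat -> R) :=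
  forall e, 0 < e -> exists N, forall k, (N <= k)%N -> u k <= e.

Lemma geometric_small (q C e : R) : 0 <= q < 1 -> 0 < e -> exists N, q ^+ N * C <= e.
Proof.
move=> /andP[q_ge0 q_lt1] e_gt0.
have eC_gt0 : 0 < e / (`|C| + 1) by rewrite divr_gt0 // ltr_wpDl.
have /cvg_expr /cvgr0_norm_le /(_ _ eC_gt0) [N _ qN] : `|q| < 1 by rewrite ger0_norm.
exists N; apply: le_trans (ler_norm _) _.
rewrite normrM (le_trans (ler_wpM2r _ (qN N (leqnn N)))) //.
by rewrite mulrAC ler_pdivrMr ?ltr_wpDl // ler_pM2l // lerDl.
Qed.

Lemma vanishing_contraction (x y : nat -> R) (q : R) : 0 <= q < 1 ->
  (forall k, 0 <= x k) -> (forall k, x k.+1 <= q * x k + y k) ->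
  vanishing y -> vanishing x.
Proof.
move=> q01 x_ge0 xS y_van e e_gt0; have /andP[q_ge0 q_lt1] := q01.
have eq_gt0 : 0 < e / 2 * (1 - q) by rewrite mulr_gt0 ?divr_gt0 ?subr_gt0.
have [N yN] := y_van _ eq_gt0.
have xNj j : x (N + j)%N <= q ^+ j * x N + e / 2.
  elim: j => [|j IH]; first by rewrite addn0 expr0 mul1r lerDl divr_ge0 // ltW.
  rewrite addnS (le_trans (xS _)) // exprS.
  have := yN (N + j)%N (leq_addr _ _).
  have : q * x (N + j)%N <= q * (q ^+ j * x N + e / 2) by rewrite ler_wpM2l.
  nra.
have [M qM] := geometric_small (x N) q01 (divr_gt0 e_gt0 (ltr0n _ 2)).
exists (N + M)%N => k NMk.
have Nk : (N <= k)%N := leq_trans (leq_addr M N) NMk.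
rewrite -(subnKC Nk); apply: le_trans (xNj _) _.
have : q ^+ (k - N) <= q ^+ M.
  by apply: ler_wiXn2l; rewrite ?(ltW q_lt1) ?leq_subRL.
have := x_ge0 N; nra.
Qed.

End Vanishing.

Section PowerDecay.
Variable R : realType.
Local Notation normc := (@Normc.normc R).

Definition mx_l1norm p q (X : 'M[R[i]]_(p, q)) : R := \sum_i \sum_j normc (X i j).

Lemma mx_l1norm_ge0 p q (X : 'M[R[i]]_(p, q)) : 0 <= mx_l1norm X.
Proof. by apply: sumr_ge0 => i _; apply: sumr_ge0 => j _; apply: normc_ge0. Qed.

Lemma mx_l1normD p q (X Y : 'M[R[i]]_(p, q)) :
  mx_l1norm (X + Y) <= mx_l1norm X + mx_l1norm Y.
Proof.
rewrite /mx_l1norm -big_split; apply: ler_sum => i _.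
by rewrite -big_split; apply: ler_sum => j _; rewrite mxE le_normcD.
Qed.

Lemma mx_l1normZ p q c (X : 'M[R[i]]_(p, q)) : mx_l1norm (c *: X) = normc c * mx_l1norm X.
Proof.
rewrite /mx_l1norm mulr_sumr; apply: eq_bigr => i _; rewrite mulr_sumr.
by apply: eq_bigr => j _; rewrite mxE Normc.normcM.
Qed.

Lemma normc_le_mx_l1norm p q (X : 'M[R[i]]_(p, q)) i j : normc (X i j) <= mx_l1norm X.
Proof.
rewrite /mx_l1norm (bigD1 i) //= (bigD1 j) //= -addrA lerDl.
by rewrite addr_ge0 ?sumr_ge0 // => *; rewrite ?sumr_ge0 // => *; apply: normc_ge0.
Qed.

Variables (m : nat) (M : 'M[R[i]]_m.+1) (t : R).
Hypothesis t_gt0 : 0 < t.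

Let scaled P k := (t%:C%C^-1) ^+ k *: (P * M ^+ k).

Lemma scaled_powers_peel P l : normc l < t -> GRing.comm P M ->
  vanishing (fun k => mx_l1norm (scaled ((M - l%:M) * P) k)) ->
  vanishing (fun k => mx_l1norm (scaled P k)).
Proof.
move=> l_lt PM van.
have scaledS k : scaled P k.+1 = (l * t%:C%C^-1) *: scaled P k
                                 + t%:C%C^-1 *: scaled ((M - l%:M) * P) k.
  rewrite /scaled; have -> : P * M ^+ k.+1 = l *: (P * M ^+ k) + (M - l%:M) * P * M ^+ k.
    rewrite exprS mulrA PM -!mulrA mulrBl -scalemx1 -scalerAl mul1r.
    by rewrite addrC subrK.
  by rewrite scalerDr !scalerA exprS mulrAC [_ * l]mulrC.
have normc_tV : normc t%:C%C^-1 = t^-1 by rewrite Normc.normcV normc_real gtr0_norm.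
apply: (vanishing_contraction (q := normc l / t)
  (y := fun k => t^-1 * mx_l1norm (scaled ((M - l%:M) * P) k))).
- by rewrite divr_ge0 ?normc_ge0 ?ltW //= ltr_pdivrMr // mul1r.
- by move=> k; apply: mx_l1norm_ge0.
- move=> k; rewrite scaledS; apply: (le_trans (mx_l1normD _ _)).
  by rewrite !mx_l1normZ Normc.normcM normc_tV.
- move=> e e_gt0; have [N HN] := van (e * t) (mulr_gt0 e_gt0 t_gt0).
  by exists N => k /HN le_et; rewrite mulrC ler_pdivrMr.
Qed.

Lemma scaled_powers_vanishing : (forall l, root (char_poly M) l -> normc l < t) ->
  vanishing (fun k => mx_l1norm (scaled 1 k)).
Proof.
move=> roots_lt.
have [r char_polyE] := closed_field_poly_normal (char_poly M).
rewrite (monicP (char_poly_monic M)) scale1r in char_polyE.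
pose Q r := \prod_(z <- r) (M - z%:M).
have Qr0 : Q r = 0.
  rewrite -(Cayley_Hamilton M) char_polyE rmorph_prod; apply: eq_bigr => z _.
  by rewrite rmorphB /= horner_mx_X horner_mx_C.
have QM r1 : GRing.comm (Q r1) M.
  apply/commr_sym/commr_prod => z _.
  by apply: commrB; [exact: commr_refl | exact: scalar_mxC].
(* Peel off the factors of the Cayley-Hamilton identity 0 = \prod_z (M - z). *)
suff peel r1 r2 : all (fun z => normc z < t) r1 ->
    vanishing (fun k => mx_l1norm (scaled (Q (r1 ++ r2)) k)) ->
    vanishing (fun k => mx_l1norm (scaled (Q r2) k)).
  have := peel r [::]; rewrite cats0 Qr0 /Q big_nil; apply.
    by apply/allP => z zr; apply: roots_lt; rewrite char_polyE root_prod_XsubC.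
  move=> e e_gt0; exists 0%N => k _.
  rewrite /scaled mul0r scaler0 /mx_l1norm big1 ?ltW // => i _.
  by rewrite big1 // => j _; rewrite mxE Normc.normc0.
elim: r1 => [//|z r1 IH] /andP[z_lt r1_lt] van.
apply: (IH r1_lt); apply: (scaled_powers_peel z_lt (QM _)).
by move: van; rewrite /Q cat_cons big_cons.
Qed.

End PowerDecay.

Lemma char_poly_trmx (F : comNzRingType) n (A : 'M[F]_n) : char_poly A^T = char_poly A.
Proof.
rewrite /char_poly -det_tr; congr (\det _).
by rewrite /char_poly_mx linearB /= tr_scalar_mx map_trmx trmxK.
Qed.

Lemma eigenvector_of_root (F : fieldType) n (A : 'M[F]_n) a : root (char_poly A) a ->
  exists2 w : 'cV[F]_n, w != 0 & A *m w = a *: w.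
Proof.
rewrite -char_poly_trmx -eigenvalue_root_char => /eigenvalueP [v vA v_neq0].
exists v^T; first by rewrite trmx_eq0.
by rewrite -[A]trmxK -trmx_mul vA linearZ.
Qed.

Lemma exists_argmax_seq (T : eqType) (R : realDomainType) (s : seq T) (f : T -> R) :
  s != [::] -> exists2 x, x \in s & forall y, y \in s -> f y <= f x.
Proof.
elim: s => [//|a s IH] _.
have [->|/IH [x xs x_max]] := eqVneq s [::].
  by exists a => [|y]; rewrite ?inE // => /eqP ->.
have [fa_le|fx_lt] := leP (f a) (f x).
  by exists x => [|y]; rewrite inE ?xs ?orbT // => /orP [/eqP ->|/x_max].
exists a => [|y]; rewrite inE ?eqxx // => /orP [/eqP ->//|/x_max fy_le].
exact: le_trans fy_le (ltW fx_lt).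
Qed.

Section Spectrum.
Variable R : realType.
Local Notation normc := (@Normc.normc R).
Local Notation toC := (fun a : R => a%:C%C).

Lemma mulmx_powers_small m (M : 'M[R]_m.+1) (t : R) (x : 'cV[R]_m.+1) : 0 < t ->
  (forall l, root (char_poly (map_mx toC M)) l -> normc l < t) ->
  forall d, 0 < d -> exists k, forall i, `|(M ^+ k *m x) i 0| <= d * t ^+ k.
Proof.
move=> t_gt0 roots_lt d d_gt0.
pose S := \sum_j `|x j 0|.
have S1_gt0 : 0 < S + 1 by rewrite ltr_wpDl ?sumr_ge0.
have e_gt0 : 0 < d / (S + 1) by rewrite divr_gt0.
have [k Mk] := scaled_powers_vanishing t_gt0 roots_lt e_gt0.
exists k => i.
have tk_gt0 : 0 < t ^+ k by rewrite exprn_gt0.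
have Mk_ij j : `|(M ^+ k) i j| <= d / (S + 1) * t ^+ k.
  have := le_trans (normc_le_mx_l1norm _ i j) (Mk k (leqnn k)).
  rewrite mul1r mxE -rmorphXn mxE Normc.normcM normcX Normc.normcV !normc_real.
  by rewrite gtr0_norm // exprVn mulrC ler_pdivrMr.
rewrite mxE (le_trans (ler_norm_sum _ _ _)) //.
apply: (@le_trans _ _ (d / (S + 1) * t ^+ k * S)).
  by rewrite /S mulr_sumr; apply: ler_sum => j _; rewrite normrM ler_wpM2r.
by rewrite mulrAC ler_wpM2r ?(ltW tk_gt0) // mulrAC ler_pdivrMr // ler_pM2l // lerDl.
Qed.

Lemma spectral_radius_attained m (M : 'M[R]_m.+1) :
  exists l, [/\ root (char_poly (map_mx toC M)) l, spectral_radius M = normc l &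
    forall l', root (char_poly (map_mx toC M)) l' -> normc l' <= normc l].
Proof.
set p := char_poly _.
have [r pE] := closed_field_poly_normal p.
rewrite (monicP (char_poly_monic _)) scale1r in pE.
have rootE x : root p x = (x \in r) by rewrite pE root_prod_XsubC.
have r_neq0 : r != [::].
  apply/eqP => r0; have := size_char_poly (map_mx toC M).
  by rewrite -/p pE r0 big_nil size_poly1.
have [l lr l_max] := exists_argmax_seq normc r_neq0.
have ub : has_ubound [set x : R | exists l', root p l' /\ x = normc l'].
  by exists (normc l) => _ [l' [rl' ->]]; apply: l_max; rewrite -rootE.
exists l; split => [||l']; rewrite ?rootE //; last exact: l_max.
apply/eqP; rewrite eq_le; apply/andP; split.
  apply: ge_sup; first by exists (normc l), l; rewrite rootE.
  by move=> _ [l' [rl' ->]]; apply: l_max; rewrite -rootE.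
by apply: (ub_le_sup ub); exists l; rewrite rootE.
Qed.

Lemma spectral_radius0 (M : 'M[R]_0) : spectral_radius M = 0.
Proof.
rewrite /spectral_radius (_ : [set _ | _] = set0) ?sup0 //.
apply/seteqP; split => // x [l [+ _]].
by rewrite /char_poly det_mx00 rootC oner_eq0.
Qed.

End Spectrum.

Section ConvexCones.
Variables (R : realType) (n : nat).
Implicit Types (L K : set 'cV[R]_n) (M N : 'M[R]_n).

Definition convex_cone L :=
  [/\ L 0, forall a x, 0 <= a -> L x -> L (a *: x) & forall x y, L x -> L y -> L (x + y)].

Definition order_unit L e :=
  forall z, exists2 c, 0 <= c & L (c *: e + z) /\ L (c *: e - z).

Lemma proper_cone_convex K : proper_cone K -> convex_cone K.
Proof.
case=> coneK _ convK _ [e /nbhs_singleton Ke].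
have K0 : K 0 by rewrite -(scale0r e); apply: coneK.
split=> // x y Kx Ky.
have -> : x + y = 2 *: ((1 / 2) *: x + (1 - 1 / 2) *: y).
  by apply/matrixP => i j; rewrite !mxE; field.
by apply: coneK => //; apply: convK => //; apply/andP; split; lra.
Qed.

Lemma interior_order_unit K e : is_cone K -> (K)° e -> order_unit K e.
Proof.
move=> coneK /nbhs_ballP [r r_gt0 ballK] z.
pose S := \sum_i `|z i 0|.
pose a := r / (2 * (S + 1)).
have S1_gt0 : 0 < S + 1 by rewrite ltr_wpDl ?sumr_ge0.
have a_gt0 : 0 < a by rewrite divr_gt0 ?mulr_gt0.
have a_lt : a * (S + 1) < r.
  by rewrite /a invfM mulrA mulfVK ?gt_eqF // ltr_pdivrMr // ltr_pMr // ltr1n.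
clearbody a.
have Kshift (sg : R) : `|sg| = 1 -> K (e + sg * a *: z).
  move=> sg1; apply: ballK; split=> // i j; rewrite (ord1 j) /ball /= !mxE.
  rewrite opprD addrA subrr sub0r normrN !normrM sg1 mul1r gtr0_norm //.
  have z_le : `|z i 0| <= S + 1.
    by rewrite /S (bigD1 i) //= -addrA lerDl addr_ge0 ?sumr_ge0.
  exact: le_lt_trans (ler_wpM2l (ltW a_gt0) z_le) a_lt.
exists a^-1; first by rewrite invr_ge0 ltW.
have Ka (sg : R) : `|sg| = 1 -> K (a^-1 *: e + sg *: z).
  move=> sg1; have -> : a^-1 *: e + sg *: z = a^-1 *: (e + sg * a *: z).
    by rewrite scalerDr !scalerA mulrCA mulVf ?gt_eqF // mulr1.
  by apply: coneK (Kshift _ sg1); rewrite invr_ge0 ltW.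
split; first by rewrite -[z]scale1r; apply: Ka; rewrite normr1.
by rewrite -scaleN1r; apply: Ka; rewrite normrN1.
Qed.

Lemma proper_cone_order_unit K : proper_cone K -> exists2 e, K e & order_unit K e.
Proof.
case=> coneK _ _ _ [e e_int]; exists e; first exact: nbhs_singleton.
exact: interior_order_unit.
Qed.

Lemma order_unit_mulmx L1 L2 M e : M \in unitmx ->
  (forall x, L1 x -> L2 (M *m x)) -> order_unit L1 e -> order_unit L2 (M *m e).
Proof.
move=> M_unit ML unit_e z; have [c c_ge0 [Lp Lm]] := unit_e (invmx M *m z).
exists c => //; rewrite -[z](mulKVmx M_unit) scalemxAr -mulmxDr -mulmxBr.
by split; apply: ML.
Qed.

Variable L : set 'cV[R]_n.
Hypothesis convL : convex_cone L.

Lemma cone0 : L 0. Proof. by case: convL. Qed.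
Lemma coneZ a x : 0 <= a -> L x -> L (a *: x). Proof. by case: convL => _ + _; apply. Qed.
Lemma coneD x y : L x -> L y -> L (x + y). Proof. by case: convL => _ _; apply. Qed.

Lemma cone_sum I (r : seq I) (P : pred I) (f : I -> 'cV[R]_n) :
  (forall i, P i -> L (f i)) -> L (\sum_(i <- r | P i) f i).
Proof.
move=> Lf; elim/big_rec: _ => [|i x Pi Lx]; first exact: cone0.
by apply: coneD => //; apply: Lf.
Qed.

Lemma cone_midpoint x y : L (x + y) -> L (x - y) -> L x.
Proof.
move=> Lp Lm; have -> : x = (1 / 2) *: ((x + y) + (x - y)).
  by apply/matrixP => i j; rewrite !mxE; field.
by apply: coneZ (coneD Lp Lm); rewrite divr_ge0.
Qed.

Lemma cone_segment x y a : L (x + y) -> L (x - y) -> -1 <= a <= 1 -> L (x + a *: y).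
Proof.
move=> Lp Lm /andP[a_ge a_le].
have -> : x + a *: y = ((1 + a) / 2) *: (x + y) + ((1 - a) / 2) *: (x - y).
  by apply/matrixP => i j; rewrite !mxE; field.
by apply: coneD; apply: coneZ => //; apply: divr_ge0; lra.
Qed.

Lemma cone_shrink x y a : L x -> L (x + a *: y) -> 1 <= a -> L (x + y).
Proof.
move=> Lx Lxy a_ge1; have a_gt0 : 0 < a := lt_le_trans ltr01 a_ge1.
have -> : x + y = a^-1 *: (x + a *: y) + (1 - a^-1) *: x.
  by apply/matrixP => i j; rewrite !mxE; field; rewrite gt_eqF.
by apply: coneD; apply: coneZ; rewrite // ?invr_ge0 ?(ltW a_gt0) // subr_ge0 invf_le1.
Qed.

Lemma Knonneg1 : Knonneg L 1.
Proof. by move=> x Lx; rewrite mul1mx. Qed.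

Lemma KnonnegD M N : Knonneg L M -> Knonneg L N -> Knonneg L (M + N).
Proof. by move=> LM LN x Lx; rewrite mulmxDl; apply: coneD; [apply: LM | apply: LN]. Qed.

Lemma KnonnegM M N : Knonneg L M -> Knonneg L N -> Knonneg L (M * N).
Proof. by move=> LM LN x Lx; rewrite -mulmxE -mulmxA; apply/LM/LN. Qed.

Lemma KnonnegX M k : Knonneg L M -> Knonneg L (M ^+ k).
Proof.
move=> LM; elim: k => [|k IH]; first by rewrite expr0; apply: Knonneg1.
by rewrite exprS; apply: KnonnegM.
Qed.

Lemma Knonneg_sum I (r : seq I) (P : pred I) (F : I -> 'M[R]_n) :
  (forall i, P i -> Knonneg L (F i)) -> Knonneg L (\sum_(i <- r | P i) F i).
Proof.
move=> LF x Lx; rewrite mulmx_suml; apply: cone_sum => i Pi.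
exact: LF.
Qed.

End ConvexCones.

Arguments Knonneg1 {R n L}.

Section ClosedCones.
Variables (R : realType) (n : nat) (K : set 'cV[R]_n).
Hypothesis properK : proper_cone K.

Lemma proper_cone_squeeze_eq0 (z : 'cV[R]_n) :
  (forall d, 0 < d ->
     exists v : 'cV[R]_n, [/\ forall i, `|v i 0| <= d, K (v + z) & K (v - z)]) ->
  z = 0.
Proof.
case: properK => _ closedK _ pointedK _ small.
have Kshift (q : 'cV[R]_n) :
    (forall d, 0 < d -> exists2 v : 'cV[R]_n, forall i, `|v i 0| <= d & K (v + q)) -> K q.
  move=> near_q; apply: closedK => B /nbhs_ballP [e e_gt0 ballB].
  have [v v_le Kvq] := near_q (e / 2) (divr_gt0 e_gt0 (ltr0n _ 2)).
  exists (v + q); split => //; apply: ballB; split => // i j.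
  rewrite (ord1 j) /ball /= !mxE opprD addrCA subrr addr0 normrN.
  by apply: le_lt_trans (v_le i) _; rewrite ltr_pdivrMr // ltr_pMr // ltr1n.
by apply: pointedK; apply: Kshift => d /small [v [v_le Kp Km]]; exists v.
Qed.

Lemma proper_cone_multiples_eq0 (x z : 'cV[R]_n) :
  (forall N : nat, K (x + N.+1%:R *: z) /\ K (x - N.+1%:R *: z)) -> z = 0.
Proof.
move=> Kxz; apply: proper_cone_squeeze_eq0 => d d_gt0.
pose S := \sum_i `|x i 0|.
have S_ge0 : 0 <= S by apply: sumr_ge0.
pose N := Num.bound (S / d).
have S_lt : S < N.+1%:R * d.
  rewrite -ltr_pdivrMr //; apply: lt_le_trans (archi_boundP (divr_ge0 S_ge0 (ltW d_gt0))) _.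
  by rewrite ler_nat.
have N1_gt0 : 0 < N.+1%:R :> R by rewrite ltr0n.
exists (N.+1%:R^-1 *: x); split.
- move=> i; rewrite mxE normrM gtr0_norm ?invr_gt0 // mulrC ler_pdivrMr //.
  have x_le : `|x i 0| <= S by rewrite /S (bigD1 i) //= lerDl sumr_ge0.
  by rewrite mulrC ltW // (le_lt_trans x_le S_lt).
- rewrite -[z](scalerK (lt0r_neq0 N1_gt0)) -scalerDr.
  by apply: (coneZ (proper_cone_convex properK) _ (Kxz N).1); rewrite invr_ge0 ltW.
- rewrite -[z](scalerK (lt0r_neq0 N1_gt0)) -scalerBr.
  by apply: (coneZ (proper_cone_convex properK) _ (Kxz N).2); rewrite invr_ge0 ltW.
Qed.

End ClosedCones.

Section ComplexEigenvectors.
Variables (R : realType) (n : nat).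
Local Notation normc := (@Normc.normc R).
Local Notation toC := (fun a : R => a%:C%C).

Definition re_mx p q (X : 'M[R[i]]_(p, q)) : 'M[R]_(p, q) := map_mx (@complex.Re R) X.
Definition im_mx p q (X : 'M[R[i]]_(p, q)) : 'M[R]_(p, q) := map_mx (@complex.Im R) X.

Lemma re_mx_mul p q r (B : 'M[R]_(p, q)) (w : 'M[R[i]]_(q, r)) :
  re_mx (map_mx toC B *m w) = B *m re_mx w.
Proof.
apply/matrixP => i j; rewrite !mxE (raddf_sum (@complex.Re R)).
by apply: eq_bigr => l _; rewrite !mxE; case: (w l j) => a b /=; rewrite mul0r subr0.
Qed.

Lemma re_mxZ p q z (w : 'M[R[i]]_(p, q)) :
  re_mx (z *: w) = complex.Re z *: re_mx w - complex.Im z *: im_mx w.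
Proof. by apply/matrixP => i j; rewrite !mxE; case: z; case: (w i j). Qed.

Lemma re_mxNZ p q z (w : 'M[R[i]]_(p, q)) : re_mx ((- z) *: w) = - re_mx (z *: w).
Proof. by rewrite !re_mxZ; case: z => a b /=; rewrite !scaleNr opprK opprB addrC. Qed.

Lemma re_mx_realZ p q (a : R) z (w : 'M[R[i]]_(p, q)) :
  re_mx ((a%:C%C * z) *: w) = a *: re_mx (z *: w).
Proof.
rewrite !re_mxZ scalerBr !scalerA; case: z => x y /=.
by rewrite !mul0r subr0 addr0.
Qed.

Lemma re_mx_phase_neq0 (w : 'cV[R[i]]_n) : w != 0 ->
  exists2 z, normc z = 1 & re_mx (z *: w) != 0.
Proof.
move=> w_neq0; have [re_w0|] := eqVneq (re_mx w) 0; last first.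
  by exists 1; rewrite ?Normc.normc1 ?scale1r.
exists (- 'i)%C; first by rewrite normcN /Normc.normc /= expr0n add0r expr1n sqrtr1.
rewrite re_mxZ re_w0 scaler0 /= sub0r scaleN1r opprK.
apply: contra w_neq0 => /eqP im_w0; apply/eqP/matrixP => i j.
move/matrixP: re_w0 => /(_ i j); move/matrixP: im_w0 => /(_ i j); rewrite !mxE.
by case: (w i j) => a b /= -> ->.
Qed.

Lemma eigenvectorX (B : 'M[R[i]]_n) (w : 'cV[R[i]]_n) mu k :
  B *m w = mu *: w -> B ^+ k *m w = mu ^+ k *: w.
Proof.
move=> Bw; elim: k => [|k IH]; first by rewrite expr0 scale1r mul1mx.
by rewrite exprS -mulmxE -mulmxA IH -scalemxAr Bw scalerA -exprSr.
Qed.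

Lemma order_unit_phases L e (w : 'cV[R[i]]_n) : convex_cone L -> order_unit L e ->
  exists2 c, 0 <= c & forall z, normc z = 1 -> L (c *: e + re_mx (z *: w)).
Proof.
move=> convL unit_e.
have [c1 c1_ge0 [Lre_p Lre_m]] := unit_e (re_mx w).
have [c2 c2_ge0 [Lim_p Lim_m]] := unit_e (im_mx w).
exists (c1 + c2) => [|z z1]; first exact: addr_ge0.
have := normc_sqr z; rewrite z1 expr1n re_mxZ; case: z z1 => a b _ /= sq1.
have -> : (c1 + c2) *: e + (a *: re_mx w - b *: im_mx w)
          = (c1 *: e + a *: re_mx w) + (c2 *: e + (- b) *: im_mx w).
  by rewrite scalerDl scaleNr addrACA.
by apply: (coneD convL); apply: (cone_segment convL) => //; apply/andP; split; nra.
Qed.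

(* With r mu = |mu| and |r| = 1, B^k maps Re (z r^k w) to |mu|^k Re (z w). *)
Lemma cone_eigen_orbit L e (B : 'M[R]_n) (w : 'cV[R[i]]_n) mu :
  convex_cone L -> order_unit L e -> Knonneg L B -> map_mx toC B *m w = mu *: w ->
  exists2 c, 0 <= c & forall z k, normc z = 1 ->
    L (B ^+ k *m (c *: e) + normc mu ^+ k *: re_mx (z *: w)).
Proof.
move=> convL unit_e B_ge0 Bw.
have [c c_ge0 Lc] := order_unit_phases w convL unit_e.
exists c => // z k z1.
have [r r1 r_mu] := normc_phase mu.
have zr1 : normc (z * r ^+ k) = 1 by rewrite Normc.normcM normcX r1 expr1n mulr1.
have := KnonnegX k B_ge0 (Lc _ zr1).
have BkC : map_mx toC (B ^+ k) *m w = mu ^+ k *: w by rewrite rmorphXn; exact: eigenvectorX.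
rewrite mulmxDr -re_mx_mul -[_ *m (_ *: w)]scalemxAr BkC scalerA.
by rewrite -mulrA -exprMn r_mu -rmorphXn mulrC re_mx_realZ.
Qed.

End ComplexEigenvectors.

Section ConeSpectrum.
Variables (R : realType) (n : nat) (K : set 'cV[R]_n).
Hypothesis properK : proper_cone K.
Local Notation normc := (@Normc.normc R).
Local Notation toC := (fun a : R => a%:C%C).

Lemma roots_lt1_of_bounded_orbit (B : 'M[R]_n) e g : order_unit K e -> Knonneg K B ->
  (forall N, K (g - \sum_(k < N) B ^+ k *m e)) ->
  forall mu, root (char_poly (map_mx toC B)) mu -> normc mu < 1.
Proof.
move=> unit_e B_ge0 g_bound mu /eigenvector_of_root [w w_neq0 Bw].
rewrite ltNge; apply/negP => mu_ge1.
have convK := proper_cone_convex properK.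
have [c c_ge0 orbit] := cone_eigen_orbit convK unit_e B_ge0 Bw.
have [z z1 y_neq0] := re_mx_phase_neq0 w_neq0.
have Kc k : K (B ^+ k *m (c *: e)).
  apply: (cone_midpoint convK (y := normc mu ^+ k *: re_mx (z *: w))); first exact: orbit.
  by rewrite -scalerN -re_mxNZ; apply: orbit; rewrite normcN.
have Kmult N z' : normc z' = 1 -> K (c *: g + N.+1%:R *: re_mx (z' *: w)).
  move=> z'1; have -> : c *: g + N.+1%:R *: re_mx (z' *: w) =
      c *: (g - \sum_(k < N.+1) B ^+ k *m e)
      + \sum_(k < N.+1) (B ^+ k *m (c *: e) + re_mx (z' *: w)).
    rewrite big_split /= sumr_const card_ord scaler_nat scalerBr addrA; congr (_ + _).
    by rewrite -!mulmx_suml scalemxAr subrK.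
  apply: (coneD convK); first exact: (coneZ convK c_ge0 (g_bound _)).
  apply: (cone_sum convK) => k _.
  exact: (cone_shrink convK (Kc k) (orbit z' k z'1) (exprn_ege1 k mu_ge1)).
apply/negP: y_neq0; rewrite negbK; apply/eqP.
apply: (proper_cone_multiples_eq0 properK (x := c *: g)) => N.
split; first exact: Kmult.
by rewrite -scalerN -re_mxNZ; apply: Kmult; rewrite normcN.
Qed.

Lemma dominated_powers (L : set 'cV[R]_n) (T Tb : 'M[R]_n) : Knonneg L T -> Knonneg K Tb ->
  (forall y, L y -> K ((Tb - T) *m y)) -> forall k y, L y -> K ((Tb ^+ k - T ^+ k) *m y).
Proof.
have convK := proper_cone_convex properK.
move=> T_ge0 Tb_ge0 dom; elim=> [|k IH] y Ly.
  by rewrite subrr mul0mx; apply: cone0 convK.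
have -> : (Tb ^+ k.+1 - T ^+ k.+1) *m y =
    Tb *m ((Tb ^+ k - T ^+ k) *m y) + (Tb - T) *m (T ^+ k *m y).
  by rewrite !mulmxA -mulmxDl !mulmxE mulrBr mulrBl !exprS addrA subrK.
by apply: (coneD convK); [apply/Tb_ge0/IH | apply/dom/(KnonnegX k T_ge0)].
Qed.

End ConeSpectrum.

Section ConeSpectrumComparison.
Variables (R : realType) (m : nat) (K : set 'cV[R]_m.+1).
Hypothesis properK : proper_cone K.
Local Notation normc := (@Normc.normc R).
Local Notation toC := (fun a : R => a%:C%C).

Lemma roots_le_of_dominated (L : set 'cV[R]_m.+1) e (T Tb : 'M[R]_m.+1) :
  convex_cone L -> order_unit L e -> L `<=` K -> Knonneg L T -> Knonneg K Tb ->
  (forall y, L y -> K ((Tb - T) *m y)) ->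
  forall mu, root (char_poly (map_mx toC T)) mu -> normc mu <= spectral_radius Tb.
Proof.
move=> convL unit_e LK T_ge0 Tb_ge0 dom mu /eigenvector_of_root [w w_neq0 Tw].
have convK := proper_cone_convex properK.
have [l [_ rhoE l_max]] := spectral_radius_attained Tb.
rewrite leNgt; apply/negP => rho_lt.
have t_gt0 : 0 < normc mu by apply: le_lt_trans rho_lt; rewrite rhoE normc_ge0.
have roots_lt l' : root (char_poly (map_mx toC Tb)) l' -> normc l' < normc mu.
  by move/l_max/le_lt_trans; apply; rewrite -rhoE.
have [c c_ge0 orbit] := cone_eigen_orbit convL unit_e T_ge0 Tw.
have [z z1 y_neq0] := re_mx_phase_neq0 w_neq0.
have Lce : L (c *: e).
  apply: (cone_midpoint convL (y := re_mx (z *: w))).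
    by have := orbit z 0%N z1; rewrite expr0 mul1mx scale1r.
  by have := orbit (- z) 0%N (etrans (normcN z) z1); rewrite expr0 mul1mx scale1r re_mxNZ.
have Kdom k z' : normc z' = 1 ->
    K (Tb ^+ k *m (c *: e) + normc mu ^+ k *: re_mx (z' *: w)).
  move=> z'1; have -> : Tb ^+ k *m (c *: e) + normc mu ^+ k *: re_mx (z' *: w) =
      (Tb ^+ k - T ^+ k) *m (c *: e) + (T ^+ k *m (c *: e) + normc mu ^+ k *: re_mx (z' *: w)).
    by rewrite mulmxBl addrA subrK.
  apply: (coneD convK (dominated_powers properK T_ge0 Tb_ge0 dom k Lce)).
  exact: LK (orbit z' k z'1).
apply/negP: y_neq0; rewrite negbK; apply/eqP/(proper_cone_squeeze_eq0 properK) => d d_gt0.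
have [k Tbk] := mulmx_powers_small (c *: e) t_gt0 roots_lt d_gt0.
have tk_gt0 : 0 < normc mu ^+ k := exprn_gt0 _ t_gt0.
have tkV_ge0 : 0 <= (normc mu ^+ k)^-1 by rewrite invr_ge0 ltW.
exists ((normc mu ^+ k)^-1 *: (Tb ^+ k *m (c *: e))); split.
- by move=> i; rewrite mxE normrM ger0_norm // mulrC ler_pdivrMr.
- rewrite -[re_mx _](scalerK (lt0r_neq0 tk_gt0)) -scalerDr.
  exact: (coneZ convK tkV_ge0 (Kdom k z z1)).
- rewrite -[re_mx _](scalerK (lt0r_neq0 tk_gt0)) -scalerBr -scalerN -re_mxNZ.
  exact: (coneZ convK tkV_ge0 (Kdom k (- z) (etrans (normcN z) z1))).
Qed.

End ConeSpectrumComparison.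

Section ConeSpectrumMatrices.
Variables (R : realType) (n : nat) (K : set 'cV[R]_n).
Hypothesis properK : proper_cone K.
Local Notation normc := (@Normc.normc R).
Local Notation toC := (fun a : R => a%:C%C).

Lemma roots_lt1_of_bounded_powers (B C W : 'M[R]_n) : W \in unitmx -> Knonneg K W ->
  Knonneg K B -> (forall N, Knonneg K (C - \sum_(k < N) B ^+ k * W)) ->
  forall mu, root (char_poly (map_mx toC B)) mu -> normc mu < 1.
Proof.
move=> W_unit W_ge0 B_ge0 bounded.
have [e Ke unit_e] := proper_cone_order_unit properK.
apply: (roots_lt1_of_bounded_orbit properK (g := C *m e)).
- exact: order_unit_mulmx W_unit W_ge0 unit_e.
- exact: B_ge0.
- by move=> N; under eq_bigr do rewrite mulmxA; rewrite -mulmx_suml -mulmxBl; apply: bounded.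
Qed.

End ConeSpectrumMatrices.

Lemma unitmx_1B_of_roots_lt1 (R : realType) n (M : 'M[R]_n) :
  (forall mu, root (char_poly (map_mx (fun a : R => a%:C%C) M)) mu -> Normc.normc mu < 1) ->
  (1 - M) \in unitmx.
Proof.
move=> roots_lt1; apply: contraT; rewrite unitmxE unitfE negbK => /det0P [v v_neq0 /eqP].
rewrite mulmxBr mulmx1 subr_eq0 => /eqP vM.
suff /roots_lt1 : root (char_poly (map_mx (fun a : R => a%:C%C) M)) 1.
  by rewrite Normc.normc1 ltxx.
rewrite -eigenvalue_root_char; apply/eigenvalueP; exists (map_mx (fun a : R => a%:C%C) v).
  by rewrite -map_mxM -vM scale1r.
by rewrite map_mx_eq0.
Qed.

Section NonnegativePowers.
Variables (R : realType) (n : nat) (K : set 'cV[R]_n).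
Hypothesis convK : convex_cone K.

Lemma Knonneg_power_series (M N : 'M[R]_n) s : Knonneg K M -> Knonneg K N ->
  Knonneg K (M ^+ s + \sum_(j < s) M ^+ j * N).
Proof.
move=> M_ge0 N_ge0; apply: (KnonnegD convK (KnonnegX s M_ge0)).
by apply: (Knonneg_sum convK) => j _; apply: KnonnegM (KnonnegX j M_ge0) N_ge0.
Qed.

Lemma Knonneg_intertwineX (H J W : 'M[R]_n) : Knonneg K H -> Knonneg K J ->
  Knonneg K (H * W - W * J) -> forall k, Knonneg K (H ^+ k * W - W * J ^+ k).
Proof.
move=> H_ge0 J_ge0 HWJ_ge0; elim=> [|k IH].
  by rewrite !expr0 mul1r mulr1 subrr => x _; rewrite mul0mx; apply: cone0 convK.
have -> : H ^+ k.+1 * W - W * J ^+ k.+1 =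
    H * (H ^+ k * W - W * J ^+ k) + (H * W - W * J) * J ^+ k.
  by rewrite mulrBr mulrBl !mulrA -exprS addrA subrK -!mulrA -exprS.
exact: (KnonnegD convK (KnonnegM H_ge0 IH) (KnonnegM HWJ_ge0 (KnonnegX k J_ge0))).
Qed.

End NonnegativePowers.

Section GeometricSums.
Variable Rg : pzRingType.
Implicit Types x y : Rg.

Lemma geometric_sum_mulr x N : \sum_(j < N) x ^+ j * (1 - x) = 1 - x ^+ N.
Proof.
elim: N => [|N IH]; first by rewrite big_ord0 expr0 subrr.
by rewrite big_ord_recr /= IH mulrBr mulr1 -exprSr addrA subrK.
Qed.

Lemma mulr_geometric_sum x N : (1 - x) * \sum_(j < N) x ^+ j = 1 - x ^+ N.
Proof. by rewrite -opprB mulNr -subrX1 opprB. Qed.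

Lemma mulrX_swap x y k : (x * y) ^+ k * x = x * (y * x) ^+ k.
Proof.
elim: k => [|k IH]; first by rewrite !expr0 mul1r mulr1.
by rewrite exprSr -!mulrA mulrA IH -mulrA -exprSr.
Qed.

End GeometricSums.

Section Splittings.
Variables (Rg : unitRingType) (F G : Rg).
Hypothesis F_unit : F \is a GRing.unit.

(* [splitting_sum F G s] is the matrix written P_s^-1 in the statement. *)
Definition splitting_sum s := \sum_(j < s) (F^-1 * G) ^+ j * F^-1.

Definition splitting_iteration V s :=
  (F^-1 * G) ^+ s + \sum_(j < s) (F^-1 * G) ^+ j * F^-1 * V.

Definition splitting_iteration_hat V s :=
  (G * F^-1) ^+ s + \sum_(j < s) (G * F^-1) ^+ j * V * F^-1.

Lemma splitting_sum_mulr s : splitting_sum s * (F - G) = 1 - (F^-1 * G) ^+ s.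
Proof.
rewrite -geometric_sum_mulr mulr_suml; apply: eq_bigr => j _.
by rewrite -mulrA mulrBr mulVr.
Qed.

Lemma splitting_sumE s : splitting_sum s = \sum_(j < s) F^-1 * (G * F^-1) ^+ j.
Proof. by apply: eq_bigr => j _; rewrite mulrX_swap. Qed.

Lemma mulr_splitting_sum s : (F - G) * splitting_sum s = 1 - (G * F^-1) ^+ s.
Proof.
rewrite splitting_sumE -mulr_geometric_sum !mulr_sumr; apply: eq_bigr => j _.
by rewrite mulrA mulrBl divrr.
Qed.

Lemma splitting_iterationE V s :
  splitting_iteration V s = 1 - splitting_sum s * (F - G - V).
Proof.
by rewrite mulrBr splitting_sum_mulr opprB addrCA subKr addrC mulr_suml.
Qed.

Lemma splitting_iteration_hatE V s : V * F^-1 * G = G * F^-1 * V ->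
  splitting_iteration_hat V s = 1 - (F - G - V) * splitting_sum s.
Proof.
move=> VFG; rewrite mulrBl mulr_splitting_sum opprB addrCA subKr addrC.
rewrite splitting_sumE mulr_sumr; congr (_ + _); apply: eq_bigr => j _.
have comm_VF : GRing.comm (V * F^-1) (G * F^-1) by rewrite /GRing.comm mulrA VFG -!mulrA.
by rewrite mulrA (commrX j comm_VF) mulrA.
Qed.

End Splittings.

Section SplittingComparison.
Variables (R : realType) (m : nat) (K : set 'cV[R]_m.+1).
Hypothesis properK : proper_cone K.
Variables (A U V F G Fb Gb : 'M[R]_m.+1) (s : nat).
Hypotheses (A_unit : A \in unitmx) (Ainv_ge0 : Knonneg K A^-1).
Hypotheses (AUV : A = U - V) (U_unit : U \in unitmx) (Uinv_ge0 : Knonneg K U^-1).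
Hypothesis V_ge0 : Knonneg K V.
Hypotheses (UFG : U = F - G) (F_unit : F \in unitmx) (Finv_ge0 : Knonneg K F^-1).
Hypotheses (GF_ge0 : Knonneg K (G * F^-1)) (VFG : V * F^-1 * G = G * F^-1 * V).
Hypotheses (UFGb : U = Fb - Gb) (Fb_unit : Fb \in unitmx) (Fbinv_ge0 : Knonneg K Fb^-1).
Hypothesis VFGb : V * Fb^-1 * Gb = Gb * Fb^-1 * V.
Hypothesis cond_i :
  Knonneg K (splitting_iteration_hat Fb Gb V s * (splitting_sum Fb Gb s)^-1).
Hypothesis cond_ii : Knonneg K (F^-1 - Fb^-1).
Hypothesis cond_iii : Knonneg K (Fb^-1 * Gb).
Hypothesis s_gt0 : (0 < s)%N.

Local Notation Hb := (Fb^-1 * Gb).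
Local Notation P := (splitting_sum F G s).
Local Notation Pb := (splitting_sum Fb Gb s).
Local Notation T := (splitting_iteration F G V s).
Local Notation Tb := (splitting_iteration Fb Gb V s).

Let convK := proper_cone_convex properK.

Let PbE : Pb = (1 - Hb ^+ s) * U^-1.
Proof. by rewrite -(splitting_sum_mulr _ Fb_unit) -UFGb mulrK. Qed.

Lemma splitting_sum_unit : Pb \in unitmx.
Proof.
have PbFb_ge0 : Knonneg K (Pb - Fb^-1).
  rewrite /splitting_sum -(prednK s_gt0) big_ord_recl /= expr0 mul1r addrC addKr.
  by apply: (Knonneg_sum convK) => j _; apply: KnonnegM (KnonnegX _ cond_iii) Fbinv_ge0.
(* Since Pb = (1 - Hb^s) U^-1, the sums of (Hb^s)^k Pb telescope below U^-1. *)
have bounded N : Knonneg K (U^-1 - \sum_(k < N) (Hb ^+ s) ^+ k * Fb^-1).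
  have -> : U^-1 - \sum_(k < N) (Hb ^+ s) ^+ k * Fb^-1 =
      (Hb ^+ s) ^+ N * U^-1 + \sum_(k < N) (Hb ^+ s) ^+ k * (Pb - Fb^-1).
    rewrite PbE; under [in RHS]eq_bigr do rewrite mulrBr mulrA.
    rewrite sumrB -[\sum_(k < N) _ * U^-1]mulr_suml geometric_sum_mulr mulrBl mul1r addrA.
    by rewrite [_ * U^-1 + _]addrC subrK.
  apply: (KnonnegD convK (KnonnegM (KnonnegX _ (KnonnegX _ cond_iii)) Uinv_ge0)).
  apply: (Knonneg_sum convK) => k _.
  exact: KnonnegM (KnonnegX _ (KnonnegX _ cond_iii)) PbFb_ge0.
have Fbinv_unit : Fb^-1 \in unitmx by rewrite unitrV.
have unit_1BHs : (1 - Hb ^+ s) \in unitmx.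
  apply: unitmx_1B_of_roots_lt1.
  apply: (roots_lt1_of_bounded_powers properK Fbinv_unit Fbinv_ge0 _ bounded).
  exact: KnonnegX.
by rewrite PbE unitmx_mul unit_1BHs unitmx_inv.
Qed.

Lemma splitting_iteration_ge0 : Knonneg K Tb.
Proof.
rewrite /splitting_iteration (eq_bigr _ (fun j _ => esym (mulrA _ _ _))).
exact (Knonneg_power_series convK s cond_iii (KnonnegM Fbinv_ge0 V_ge0)).
Qed.

Lemma spectral_radius_iteration_lt1 : spectral_radius Tb < 1.
Proof.
have AE : A = Fb - Gb - V by rewrite AUV UFGb.
have TbE : Tb = 1 - Pb * A by rewrite AE; apply: splitting_iterationE.
have Pb_unit := splitting_sum_unit.
have PbA_ge0 : Knonneg K (Pb^-1 - A).
  by move: cond_i; rewrite splitting_iteration_hatE // -AE mulrBl mul1r mulrK.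
pose C := A^-1 * Pb^-1.
have C_ge0 : Knonneg K C.
  have -> : C = A^-1 * (Pb^-1 - A) + 1 by rewrite mulrBr mulVr // subrK.
  exact (KnonnegD convK (KnonnegM Ainv_ge0 PbA_ge0) Knonneg1).
have bounded N : Knonneg K (C - \sum_(k < N) Tb ^+ k * 1).
  have ITbC : (1 - Tb) * C = 1 by rewrite TbE subKr mulrA mulrK // mulrV.
  under eq_bigr do rewrite -ITbC mulrA.
  rewrite -mulr_suml geometric_sum_mulr mulrBl mul1r subKr.
  exact: KnonnegM (KnonnegX N splitting_iteration_ge0) C_ge0.
have [l [rl -> _]] := spectral_radius_attained Tb.
exact (roots_lt1_of_bounded_powers properK (unitmx1 _ _) Knonneg1
  splitting_iteration_ge0 bounded rl).
Qed.

Lemma splitting_sum_le : Knonneg K (P - Pb).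
Proof.
have PE : P = U^-1 * (1 - (G * F^-1) ^+ s).
  by rewrite -(mulr_splitting_sum _ F_unit) -UFG mulKr.
have -> : P - Pb = Hb ^+ s * U^-1 - U^-1 * (G * F^-1) ^+ s.
  by rewrite PE PbE mulrBr mulr1 mulrBl mul1r opprB addrC addrA subrK.
apply: (Knonneg_intertwineX convK cond_iii GF_ge0 _ s).
have HbU : Hb * U^-1 = U^-1 - Fb^-1.
  have -> : Gb = Fb - U by rewrite UFGb subKr.
  by rewrite mulrBr mulVr // mulrBl mul1r mulrK.
have UGF : U^-1 * (G * F^-1) = U^-1 - F^-1.
  have -> : G = F - U by rewrite UFG subKr.
  by rewrite mulrBl mulrV // mulrBr mulr1 mulrA mulVr // mul1r.
by rewrite HbU UGF opprB addrC addrA subrK.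
Qed.

Lemma spectral_radius_iteration_le : spectral_radius T <= spectral_radius Tb.
Proof.
have TE : T = 1 - P * A by rewrite AUV UFG; apply: splitting_iterationE.
have TbE : Tb = 1 - Pb * A by rewrite AUV UFGb; apply: splitting_iterationE.
have That_ge0 : Knonneg K (1 - A * P).
  rewrite {1}AUV UFG -splitting_iteration_hatE // /splitting_iteration_hat.
  rewrite (eq_bigr _ (fun j _ => esym (mulrA _ _ _))).
  exact (Knonneg_power_series convK s GF_ge0 (KnonnegM V_ge0 Finv_ge0)).
pose L := [set y | K (A *m y)].
have convL : convex_cone L.
  split=> [|a x a_ge0|x y]; rewrite /L /=.
  - by rewrite mulmx0; apply: cone0 convK.
  - by rewrite -scalemxAr; apply (coneZ convK a_ge0).
  - by move=> Kx Ky; have := coneD convK Kx Ky; rewrite -mulmxDr.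
have [e _ unit_e] := proper_cone_order_unit properK.
have unit_L : order_unit L (A^-1 *m e).
  apply: order_unit_mulmx unit_e; first by rewrite unitrV.
  by move=> x Kx; rewrite /L /= mulmxA mulmxV // mul1mx.
have LK : L `<=` K by move=> y Ly; have := Ainv_ge0 Ly; rewrite mulmxA mulVmx // mul1mx.
have T_ge0 : Knonneg L T.
  move=> y Ly; rewrite /L /= mulmxA.
  have -> : A *m T = (1 - A * P) * A by rewrite TE mulmxE mulrBr mulr1 mulrBl mul1r mulrA.
  by rewrite -mulmxA; apply: That_ge0.
have dom y : L y -> K ((Tb - T) *m y).
  move=> Ly; have -> : Tb - T = (P - Pb) * A by rewrite TE TbE opprB addrC addrA subrK mulrBl.
  by rewrite -mulmxE -mulmxA; apply: splitting_sum_le.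
have [l [rl -> _]] := spectral_radius_attained T.
exact (roots_le_of_dominated properK convL unit_L LK T_ge0 splitting_iteration_ge0 dom rl).
Qed.

End SplittingComparison.

Lemma mxpowE (R : realType) n (M : 'M[R]_n) : mxpow M = GRing.exp M.
Proof.
apply: funext => k; elim: k => [|k IH] //.
by rewrite /mxpow /= -/(mxpow M k) IH exprS.
Qed.

Unset Implicit Arguments.

Theorem theorem3p11 (R : realType) (n : nat) (K : set 'cV[R]_n)
  (A U V F G Fb Gb : 'M[R]_n) (s : nat) :
  proper_cone K ->
  K_monotone K A ->
  K_regular_splitting K A U V ->
  K_weak_regular_splitting_II K U F G ->
  K_weak_regular_splitting_II K U Fb Gb ->
  V *m invmx F *m G = G *m invmx F *m V ->
  V *m invmx Fb *m Gb = Gb *m invmx Fb *m V ->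
  (* (i) *)
  (forall t : nat, (0 < t)%N ->
     Knonneg K
       ((mxpow (Gb *m invmx Fb) t
         + \sum_(j < t) mxpow (Gb *m invmx Fb) j *m V *m invmx Fb)
        *m invmx (\sum_(j < t) mxpow (invmx Fb *m Gb) j *m invmx Fb))) ->
  (* (ii) *)
  Kge K (invmx F) (invmx Fb) ->
  (* (iii) *)
  Knonneg K (invmx Fb *m Gb) ->
  (0 < s)%N ->
  spectral_radius
      (mxpow (invmx F *m G) s
       + \sum_(j < s) mxpow (invmx F *m G) j *m invmx F *m V)
    <= spectral_radius
      (mxpow (invmx Fb *m Gb) s
       + \sum_(j < s) mxpow (invmx Fb *m Gb) j *m invmx Fb *m V)
  /\ spectral_radius
      (mxpow (invmx Fb *m Gb) s
       + \sum_(j < s) mxpow (invmx Fb *m Gb) j *m invmx Fb *m V) < 1.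
Proof.
case: n K A U V F G Fb Gb => [|m] K A U V F G Fb Gb properK.
  by move=> *; rewrite !spectral_radius0 ltr01.
move=> [A_unit Ainv_ge0] [AUV U_unit Uinv_ge0 V_ge0] [UFG F_unit Finv_ge0 GF_ge0]
  [UFGb Fb_unit Fbinv_ge0 _] VFG VFGb cond_i cond_ii cond_iii s_gt0.
have := cond_i s s_gt0; rewrite !mxpowE !mulmxE in VFG VFGb GF_ge0 cond_iii * => cond_i_s.
split.
  exact: (spectral_radius_iteration_le properK s A_unit Ainv_ge0 AUV U_unit V_ge0
    UFG F_unit Finv_ge0 GF_ge0 VFG UFGb Fb_unit Fbinv_ge0 cond_ii cond_iii).
exact: (spectral_radius_iteration_lt1 properK A_unit Ainv_ge0 AUV U_unit Uinv_ge0
  V_ge0 UFGb Fb_unit Fbinv_ge0 VFGb cond_i_s cond_iii s_gt0).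
Qed.
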